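(* Let $0<T\le 1$ and let $(f_{n,m})$, $(g_{n,m})$ ($n\in\mathbb{Z}_+$, $m\in\mathbb{Z}$) be coefficient arrays. Then $$\Big|\sum_{n,m}f_{n,m}g_{n,m}\Big|\lesssim T\,|||f|||_{0,\frac12;T}\,|||g|||_{0,\frac12;T},$$ with an absolute implicit constant.
   Context: For a coefficient array $(h_{n,m})_{n\in\mathbb{Z}_+,m\in\mathbb{Z}}$ (identified with $h(x,t)=\sum h_{n,m}e_n(x)e(mt)$, where $e_n(x)=\sin(n\pi|x|)/|x|$ on the unit ball of $\mathbb{R}^3$ and $e(y)=e^{2\pi iy}$), $|||h|||_{0,\frac12;T}\le1$ means $h_{n,m}=\frac{a_{n,m}}{(|n^2-m|+\frac1T)^{1/2}}+\frac{a_n}{|n^2-m|}\mathbf{1}_{|n^2-m|>1/T}$ for some $(a_{n,m})$, $(a_n)$ with $\sum_{n,m}|a_{n,m}|^2\le1$, $\sum_n|a_n|^2\le1$; $|||\cdot|||_{0,\frac12;T}$ is the gauge (norm) of this convex set. *)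

From Stdlib Require Import Reals ZArith.
From Coquelicot Require Import Coquelicot.
Open Scope R_scope.

(* A coefficient array (h_{n,m}), n in Z_+ (encoded as n : nat, only n >= 1
   is used), m in Z, with complex values. *)
Definition coef := nat -> Z -> C.

Definition dist2 (n : nat) (m : Z) : R :=
  IZR (Z.abs (Z.of_nat n * Z.of_nat n - m)).

(* index j in [0, 2N] encodes m = j - N in [-N, N] *)
Definition midx (N j : nat) : Z := (Z.of_nat j - Z.of_nat N)%Z.

Definition sq_partial (a : coef) (N : nat) : R :=
  sum_n_m (fun n => sum_n (fun j => (Cmod (a n (midx N j)))^2) (2 * N)) 1 N.

(* |||h|||_{0,1/2;T} <= 1 *)
Definition in_unit_ball (T : R) (h : coef) : Prop :=
  exists (a : coef) (an : nat -> C),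
    (forall N, sq_partial a N <= 1) /\
    (forall N, sum_n_m (fun n => (Cmod (an n))^2) 1 N <= 1) /\
    forall (n : nat) (m : Z), (1 <= n)%nat ->
      h n m = Cplus (Cdiv (a n m) (RtoC (sqrt (dist2 n m + / T))))
                    (if Rlt_dec (/ T) (dist2 n m)
                     then Cdiv (an n) (RtoC (dist2 n m)) else RtoC 0).

(* the gauge (Minkowski functional) of that convex set; +oo if h lies in no
   dilate of it *)
Definition gauge (T : R) (h : coef) : Rbar :=
  Glb_Rbar (fun l => 0 < l /\ in_unit_ball T (fun n m => Cdiv (h n m) (RtoC l))).

Definition pair_partial (f g : coef) (N : nat) : C :=
  sum_n_m (fun n => sum_n (fun j => Cmult (f n (midx N j)) (g n (midx N j))) (2 * N)) 1 N.

(* Write an element of the unit ball as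
   [h = a / (|n^2 - m| + 1/T)^(1/2) + b_n / |n^2 - m| * 1_{|n^2 - m| > 1/T}].  Then
   [|h|^2 <= 2 T |a|^2 + 2 |b_n|^2 |n^2 - m|^(-2) 1_{|n^2 - m| > 1/T}], and for each [n]
   the tail [sum_{|k| > 1/T} k^(-2)] is [O(T)], so [sum |h|^2 <= 10 T].  By AM-GM,
   [sum |f g| <= 10 T] for [f], [g] in the unit ball; hence the square partial sums of
   [f g] converge absolutely, and after dilating [f] by [l] and [g] by [l'] the limit is
   bounded by [10 T l l'].  Taking the infimum over [l], then over [l'], gives the
   gauges. *)

From Stdlib Require Import Reals ZArith Lra Lia Psatz Classical.
From Coquelicot Require Import Coquelicot.
Open Scope R_scope.

Lemma sum_n_m_ge0 (a : nat -> R) n m : (forall k, 0 <= a k) -> 0 <= sum_n_m a n m.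
Proof.
  intros Ha. apply Rle_trans with (sum_n_m (fun _ => 0) n m); [|now apply sum_n_m_le].
  rewrite (sum_n_m_const_zero (G := R_AbelianMonoid)). apply Rle_refl.
Qed.

Lemma sum_n_m_le_loc (a b : nat -> R) n m :
  (forall k, (n <= k <= m)%nat -> a k <= b k) -> sum_n_m a n m <= sum_n_m b n m.
Proof.
  intros Hab. rewrite (sum_n_m_ext_loc a (fun k => Rmin (a k) (b k))).
  - apply sum_n_m_le. intros k. apply Rmin_r.
  - intros k Hk. now rewrite Rmin_left by auto.
Qed.

Lemma sum_n_m_Rplus (u v : nat -> R) n m :
  sum_n_m (fun k => u k + v k) n m = sum_n_m u n m + sum_n_m v n m.
Proof. exact (sum_n_m_plus (G := R_AbelianMonoid) u v n m). Qed.

Lemma sum_n_m_Rmult_l (c : R) (u : nat -> R) n m :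
  sum_n_m (fun k => c * u k) n m = c * sum_n_m u n m.
Proof. exact (sum_n_m_mult_l (K := R_Ring) c u n m). Qed.

Lemma sum_n_telescope (g : nat -> R) k :
  sum_n (fun j => g (S j) - g j) k = g (S k) - g 0%nat.
Proof.
  induction k as [|k IH].
  - now rewrite sum_O.
  - rewrite sum_Sn, IH. unfold plus; simpl. ring.
Qed.

Definition square_sum {G : AbelianMonoid} (h : nat -> Z -> G) (N : nat) : G :=
  sum_n_m (fun n => sum_n (fun j => h n (midx N j)) (2 * N)) 1 N.

(* The terms added when passing from the square of size [N] to size [N + 1]:
   the two new columns [m = -(N+1)], [m = N+1] for old rows, and the new row. *)
Definition square_shell {G : AbelianMonoid} (h : nat -> Z -> G) (N : nat) : G :=
  plus (sum_n_m (fun n => plus (h n (- (Z.of_nat N + 1))%Z) (h n (Z.of_nat N + 1)%Z)) 1 N)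
       (sum_n (fun j => h (S N) (midx (S N) j)) (2 * S N)).

Section SquareSums.

Context {G : AbelianMonoid}.

Lemma sum_n_SS (a : nat -> G) k :
  sum_n a (S (S k)) = plus (a 0%nat) (plus (sum_n (fun j => a (S j)) k) (a (S (S k)))).
Proof.
  rewrite sum_Sn. unfold sum_n. rewrite (sum_Sn_m a 0 (S k)) by lia.
  rewrite sum_n_m_S. now rewrite plus_assoc.
Qed.

Lemma square_sum_S (h : nat -> Z -> G) N :
  square_sum h (S N) = plus (square_sum h N) (square_shell h N).
Proof.
  unfold square_sum, square_shell. rewrite sum_n_Sm by lia. rewrite plus_assoc. f_equal.
  rewrite <- sum_n_m_plus. apply sum_n_m_ext. intros n.
  replace (2 * S N)%nat with (S (S (2 * N))) by lia. rewrite sum_n_SS.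
  replace (midx (S N) 0) with (- (Z.of_nat N + 1))%Z by (unfold midx; lia).
  replace (midx (S N) (S (S (2 * N)))) with (Z.of_nat N + 1)%Z by (unfold midx; lia).
  rewrite (sum_n_ext _ (fun j => h n (midx N j)))
    by (intros j; f_equal; unfold midx; lia).
  set (lo := h n _). set (mid := sum_n _ _). set (hi := h n (_ + _)%Z).
  rewrite (plus_comm lo), <- plus_assoc. f_equal. apply plus_comm.
Qed.

Lemma square_sum_series (h : nat -> Z -> G) N :
  square_sum h (S N) = sum_n (square_shell h) N.
Proof.
  induction N as [|N IH].
  - rewrite square_sum_S, sum_O. unfold square_sum. rewrite sum_n_m_zero by lia.
    apply plus_zero_l.
  - rewrite square_sum_S, IH, sum_Sn. reflexivity.
Qed.

Lemma square_sum_ext (h k : nat -> Z -> G) N :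
  (forall n m, h n m = k n m) -> square_sum h N = square_sum k N.
Proof.
  intros Hhk. apply sum_n_m_ext. intros n. apply sum_n_ext. intros j. apply Hhk.
Qed.

End SquareSums.

Section SquareSumLimits.

Context {K : AbsRing} {V : CompleteNormedModule K}.

Lemma norm_square_shell_le (h : nat -> Z -> V) N :
  norm (square_shell h N) <= square_shell (fun n m => norm (h n m)) N.
Proof.
  unfold square_shell. eapply Rle_trans; [apply (@norm_triangle K V)|].
  apply Rplus_le_compat; eapply Rle_trans; try apply (@norm_sum_n_m K V).
  - apply sum_n_m_le. intros n. apply (@norm_triangle K V).
  - apply Rle_refl.
Qed.

Lemma norm_square_sum_le (h : nat -> Z -> V) N :
  norm (square_sum h N) <= square_sum (fun n m => norm (h n m)) N.
Proof.
  unfold square_sum. eapply Rle_trans; [apply (@norm_sum_n_m K V)|].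
  apply sum_n_m_le. intros n. apply (@norm_sum_n_m K V).
Qed.

Lemma ex_lim_square_sum (h : nat -> Z -> V) M :
  (forall N, square_sum (fun n m => norm (h n m)) N <= M) ->
  exists L, filterlim (square_sum h) eventually (locally L).
Proof.
  intros HM. set (habs := fun n m => norm (h n m)).
  assert (Habs : ex_series (square_shell habs)).
  { assert (Hshell_ge0 : forall N, 0 <= square_shell habs N).
    { intros N. unfold square_shell, habs.
      apply Rplus_le_le_0_compat; apply sum_n_m_ge0; intros;
        try apply Rplus_le_le_0_compat; apply norm_ge_0. }
    destruct (ex_finite_lim_seq_incr (sum_n (square_shell habs)) M) as [l Hl].
    - intros N. rewrite sum_Sn. specialize (Hshell_ge0 (S N)).
      change (plus ?x ?y) with (x + y). lra.
    - intros N. rewrite <- square_sum_series. apply HM.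
    - exists l. exact Hl. }
  destruct (ex_series_le (square_shell h) (square_shell habs)) as [L HL].
  { intros N. apply norm_square_shell_le. }
  { exact Habs. }
  exists L.
  apply filterlim_ext_loc with (fun N => sum_n (square_shell h) (pred N)).
  - exists 1%nat. intros [|N] HN; [lia|]. now rewrite square_sum_series.
  - apply filterlim_comp with (2 := HL).
    intros P [N HN]. exists (S N). intros n Hn. apply HN. lia.
Qed.

Lemma norm_lim_square_sum_le (h : nat -> Z -> V) M L :
  filterlim (square_sum h) eventually (locally L) ->
  (forall N, square_sum (fun n m => norm (h n m)) N <= M) ->
  norm L <= M.
Proof.
  intros HL HM.
  assert (Hnorm : is_lim_seq (fun N => norm (square_sum h N)) (norm L))
    by (apply filterlim_comp with (1 := HL); apply (@filterlim_norm K V)).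
  apply (is_lim_seq_le _ _ _ _ (fun N => Rle_trans _ _ _ (norm_square_sum_le h N) (HM N))
           Hnorm (is_lim_seq_const M)).
Qed.

End SquareSumLimits.

Definition tail_weight (x u : R) : R :=
  if Rlt_dec x (Rabs u) then / Rabs u ^ 2 else 0.

(* Discrete comparison [/ v^2 <= 1/(v - 1/2) - 1/(v + 1/2)]: on each half-line the
   weights are dominated by the unit increments of [cap x = 1/max(., x - 1/2)], and
   gluing the two half-lines gives a nondecreasing potential of total variation
   [2/(x - 1/2)]. *)
Definition cap (x w : R) : R := / Rmax w (x - /2).

Definition tail_potential (x u : R) : R :=
  if Rle_dec 0 u then - cap x u else cap x (- u) - 2 * cap x 0.

Section TailWeights.

Variable x : R.
Hypothesis Hx : /2 < x.

Lemma cap_pos w : 0 < cap x w.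
Proof. unfold cap. apply Rinv_0_lt_compat. pose proof (Rmax_r w (x - /2)). lra. Qed.

Lemma cap_antimono a b : a <= b -> cap x b <= cap x a.
Proof.
  intros Hab. unfold cap. apply Rinv_le_contravar.
  - pose proof (Rmax_r a (x - /2)). lra.
  - apply Rle_max_compat_r, Hab.
Qed.

Lemma cap_0 : cap x 0 = / (x - /2).
Proof. unfold cap. now rewrite Rmax_right by lra. Qed.

Lemma cap_step v : /2 <= v ->
  (if Rlt_dec x v then / v ^ 2 else 0) <= cap x (v - /2) - cap x (v + /2).
Proof.
  intros Hv. destruct Rlt_dec as [Hxv|Hxv].
  - unfold cap. rewrite !Rmax_left by lra.
    replace (/ (v - /2) - / (v + /2)) with (/ ((v - /2) * (v + /2))) by (field; lra).
    apply Rinv_le_contravar; nra.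
  - pose proof (cap_antimono (v - /2) (v + /2)). lra.
Qed.

Lemma tail_potential_nonneg u : 0 <= u -> tail_potential x u = - cap x u.
Proof. intros Hu. unfold tail_potential. destruct Rle_dec; [reflexivity | lra]. Qed.

Lemma tail_potential_nonpos u : u <= 0 -> tail_potential x u = cap x (- u) - 2 * cap x 0.
Proof.
  intros Hu. unfold tail_potential. destruct Rle_dec; [|reflexivity].
  replace u with 0 by lra. rewrite Ropp_0. lra.
Qed.

Lemma tail_potential_range u : - 2 * cap x 0 <= tail_potential x u <= 0.
Proof.
  pose proof (cap_pos 0). destruct (Rle_dec 0 u).
  - rewrite tail_potential_nonneg by lra.
    pose proof (cap_pos u). pose proof (cap_antimono 0 u). lra.
  - rewrite tail_potential_nonpos by lra.
    pose proof (cap_pos (- u)). pose proof (cap_antimono 0 (- u)). lra.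
Qed.

Lemma tail_weight_le_potential_step u :
  tail_weight x u <= tail_potential x (u + /2) - tail_potential x (u - /2).
Proof.
  unfold tail_weight. destruct (Rle_dec (/2) u) as [Hu|Hu].
  - rewrite Rabs_right, !tail_potential_nonneg by lra. pose proof (cap_step u Hu). lra.
  - destruct (Rle_dec u (- /2)) as [Hu'|Hu'].
    + rewrite Rabs_left, !tail_potential_nonpos by lra.
      pose proof (cap_step (- u) ltac:(lra)).
      replace (- (u + /2)) with (- u - /2) by ring.
      replace (- (u - /2)) with (- u + /2) by ring. lra.
    + destruct Rlt_dec as [Hl|_].
      * assert (Rabs u < /2) by (apply Rabs_def1; lra). lra.
      * rewrite tail_potential_nonneg, tail_potential_nonpos by lra.
        pose proof (cap_antimono 0 (u + /2)). pose proof (cap_antimono 0 (- (u - /2))).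
        lra.
Qed.

Lemma sum_tail_weight_le a K :
  sum_n (fun j => tail_weight x (a + INR j)) K <= 2 / (x - /2).
Proof.
  set (g := fun j => tail_potential x (a + INR j - /2)).
  apply Rle_trans with (sum_n (fun j => g (S j) - g j) K).
  - apply sum_n_m_le. intros j. unfold g. rewrite S_INR.
    replace (a + (INR j + 1) - /2) with (a + INR j + /2) by lra.
    apply tail_weight_le_potential_step.
  - rewrite sum_n_telescope. unfold g.
    pose proof (tail_potential_range (a + INR (S K) - /2)).
    pose proof (tail_potential_range (a + INR 0 - /2)).
    rewrite cap_0 in *. unfold Rdiv. lra.
Qed.

End TailWeights.

Lemma square_sum_Rmult_l (c : R) (h : nat -> Z -> R) N :
  square_sum (fun n m => c * h n m) N = c * square_sum h N.
Proof.
  unfold square_sum. rewrite <- sum_n_m_Rmult_l. apply sum_n_m_ext. intros n.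
  apply sum_n_m_Rmult_l.
Qed.

Lemma dist2_Rabs n m : dist2 n m = Rabs (IZR m - IZR (Z.of_nat n * Z.of_nat n)).
Proof. unfold dist2. rewrite abs_IZR, minus_IZR. apply Rabs_minus_sym. Qed.

Lemma sum_tail_weight_row T c N : 0 < T <= 1 ->
  sum_n (fun j => tail_weight (/ T) (IZR (midx N j) - c)) (2 * N) <= 4 * T.
Proof.
  intros HT.
  assert (HiT : 1 <= / T) by (rewrite <- Rinv_1; apply Rinv_le_contravar; lra).
  rewrite (sum_n_ext _ (fun j => tail_weight (/ T) ((- INR N - c) + INR j))).
  - eapply Rle_trans; [apply sum_tail_weight_le; lra|].
    apply Rmult_le_reg_r with (/ T - /2); [lra|].
    unfold Rdiv. rewrite Rmult_assoc, Rinv_l by lra.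
    replace (4 * T * (/ T - /2)) with (4 - 2 * T) by (field; lra). lra.
  - intros j. f_equal. unfold midx. rewrite minus_IZR, <- !INR_IZR_INZ. ring.
Qed.

Lemma Cmod_plus_sq_le (z w : C) : Cmod (z + w)%C ^ 2 <= 2 * Cmod z ^ 2 + 2 * Cmod w ^ 2.
Proof.
  pose proof (Cmod_triangle z w). pose proof (Cmod_ge_0 (z + w)%C).
  pose proof (Cmod_ge_0 z). pose proof (Cmod_ge_0 w).
  pose proof (pow2_ge_0 (Cmod z - Cmod w)).
  assert (Cmod (z + w)%C ^ 2 <= (Cmod z + Cmod w) ^ 2) by (apply pow_incr; lra). nra.
Qed.

Lemma Cmod_div_R (z : C) (r : R) : 0 < r -> Cmod (z / RtoC r)%C = Cmod z / r.
Proof.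
  intros Hr. rewrite Cmod_div, Cmod_R.
  - now rewrite Rabs_right by lra.
  - intros E. apply RtoC_inj in E. lra.
Qed.

Lemma Cmod_div_sqrt_sq_le T d (z : C) : 0 < T -> 0 <= d ->
  Cmod (z / RtoC (sqrt (d + / T)))%C ^ 2 <= T * Cmod z ^ 2.
Proof.
  intros HT Hd. assert (HiT : 0 < / T) by (apply Rinv_0_lt_compat; lra).
  rewrite Cmod_div_R by (apply sqrt_lt_R0; lra).
  unfold Rdiv. rewrite Rpow_mult_distr, pow_inv, pow2_sqrt, Rmult_comm by lra.
  apply Rmult_le_compat_r; [apply pow2_ge_0|].
  rewrite <- (Rinv_inv T) at 2. apply Rinv_le_contravar; lra.
Qed.

Lemma Cmod_tail_term_sq x (z : C) u : 0 <= x ->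
  Cmod (if Rlt_dec x (Rabs u) then (z / RtoC (Rabs u))%C else RtoC 0) ^ 2
  = Cmod z ^ 2 * tail_weight x u.
Proof.
  intros Hx. unfold tail_weight. destruct Rlt_dec as [Hu|Hu].
  - rewrite Cmod_div_R by lra. field. lra.
  - rewrite Cmod_0. ring.
Qed.

Lemma unit_ball_entry_sq_le T a (b : C) n m : 0 < T ->
  Cmod (a / RtoC (sqrt (dist2 n m + / T))
        + (if Rlt_dec (/ T) (dist2 n m) then b / RtoC (dist2 n m) else RtoC 0))%C ^ 2
  <= 2 * T * Cmod a ^ 2
     + 2 * Cmod b ^ 2 * tail_weight (/ T) (IZR m - IZR (Z.of_nat n * Z.of_nat n)).
Proof.
  intros HT. eapply Rle_trans; [apply Cmod_plus_sq_le|].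
  rewrite dist2_Rabs, Cmod_tail_term_sq
    by (apply Rlt_le, Rinv_0_lt_compat, HT).
  pose proof (Cmod_div_sqrt_sq_le T _ a HT (Rabs_pos (IZR m - IZR (Z.of_nat n * Z.of_nat n)))).
  lra.
Qed.

Lemma unit_ball_square_sum_le T h N : 0 < T <= 1 -> in_unit_ball T h ->
  square_sum (fun n m => Cmod (h n m) ^ 2) N <= 10 * T.
Proof.
  intros HT [a [b [Ha [Hb Hh]]]].
  set (row := fun n => sum_n (fun j => Cmod (a n (midx N j)) ^ 2) (2 * N)).
  apply Rle_trans with (sum_n_m (fun n => 2 * T * row n + 8 * T * Cmod (b n) ^ 2) 1 N).
  - apply sum_n_m_le_loc. intros n Hn.
    set (c := IZR (Z.of_nat n * Z.of_nat n)).
    apply Rle_trans with (sum_n (fun j => 2 * T * Cmod (a n (midx N j)) ^ 2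
        + 2 * Cmod (b n) ^ 2 * tail_weight (/ T) (IZR (midx N j) - c)) (2 * N)).
    + apply sum_n_m_le. intros j. rewrite Hh by lia.
      apply unit_ball_entry_sq_le. lra.
    + unfold sum_n, row. rewrite sum_n_m_Rplus, sum_n_m_Rmult_l, sum_n_m_Rmult_l.
      pose proof (sum_tail_weight_row T c N HT). pose proof (pow2_ge_0 (Cmod (b n))).
      unfold sum_n in *. nra.
  - rewrite sum_n_m_Rplus, sum_n_m_Rmult_l, sum_n_m_Rmult_l.
    specialize (Ha N). specialize (Hb N). unfold sq_partial in Ha. fold row in Ha. nra.
Qed.

Lemma unit_ball_pair_sum_le T h k N : 0 < T <= 1 -> in_unit_ball T h -> in_unit_ball T k ->
  square_sum (fun n m => Cmod (h n m) * Cmod (k n m)) N <= 10 * T.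
Proof.
  intros HT Hh Hk.
  pose proof (unit_ball_square_sum_le T h N HT Hh).
  pose proof (unit_ball_square_sum_le T k N HT Hk).
  apply Rle_trans with
    (square_sum (fun n m => / 2 * (Cmod (h n m) ^ 2 + Cmod (k n m) ^ 2)) N).
  - apply sum_n_m_le. intros n. apply sum_n_m_le. intros j.
    pose proof (pow2_ge_0 (Cmod (h n (midx N j)) - Cmod (k n (midx N j)))). nra.
  - rewrite square_sum_Rmult_l. unfold square_sum in *.
    rewrite (sum_n_m_ext _ (fun n => sum_n (fun j => Cmod (h n (midx N j)) ^ 2) (2 * N)
                                   + sum_n (fun j => Cmod (k n (midx N j)) ^ 2) (2 * N))).
    + rewrite sum_n_m_Rplus. lra.
    + intros n. apply sum_n_m_Rplus.
Qed.

Lemma scaled_pair_sum_le T (f g : coef) l l' N : 0 < T <= 1 -> 0 < l -> 0 < l' ->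
  in_unit_ball T (fun n m => Cdiv (f n m) (RtoC l)) ->
  in_unit_ball T (fun n m => Cdiv (g n m) (RtoC l')) ->
  square_sum (fun n m => Cmod (Cmult (f n m) (g n m))) N <= 10 * T * l * l'.
Proof.
  intros HT Hl Hl' Hf Hg.
  assert (Hscale : forall n m, Cmod (Cmult (f n m) (g n m))
    = l * l' * (Cmod (Cdiv (f n m) (RtoC l)) * Cmod (Cdiv (g n m) (RtoC l')))).
  { intros n m. rewrite Cmod_mult, !Cmod_div_R by assumption. field. lra. }
  rewrite (square_sum_ext _ _ N Hscale), square_sum_Rmult_l.
  replace (10 * T * l * l') with (l * l' * (10 * T)) by ring.
  apply Rmult_le_compat_l; [nra|]. exact (unit_ball_pair_sum_le T _ _ N HT Hf Hg).
Qed.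

Lemma Glb_Rbar_inhabited (S : R -> Prop) G : Glb_Rbar S = Finite G -> exists l, S l.
Proof.
  intros HG. apply NNPP. intros Hempty.
  destruct (Glb_Rbar_correct S) as [_ Hgreatest]. rewrite HG in Hgreatest.
  assert (Hlb : is_lb_Rbar S (Finite (G + 1)))
    by (intros l Hl; exfalso; apply Hempty; now exists l).
  specialize (Hgreatest _ Hlb). simpl in Hgreatest. lra.
Qed.

Lemma le_Glb_Rbar (S : R -> Prop) G c :
  Glb_Rbar S = Finite G -> (forall l, S l -> c <= l) -> c <= G.
Proof.
  intros HG Hc. destruct (Glb_Rbar_correct S) as [_ Hgreatest]. rewrite HG in Hgreatest.
  apply (Hgreatest (Finite c)). intros l Hl. apply Hc, Hl.
Qed.

Lemma le_mult_Glb_Rbar (S : R -> Prop) G A c : 0 <= A ->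
  Glb_Rbar S = Finite G -> (forall l, S l -> c <= A * l) -> c <= A * G.
Proof.
  intros HA HG Hc. destruct (Rle_lt_or_eq_dec 0 A HA) as [Hpos|<-].
  - apply Rmult_le_reg_l with (/ A); [now apply Rinv_0_lt_compat|].
    rewrite <- Rmult_assoc, Rinv_l, Rmult_1_l by lra.
    apply (le_Glb_Rbar S); [exact HG|]. intros l Hl.
    apply Rmult_le_reg_l with A; [exact Hpos|].
    rewrite <- Rmult_assoc, Rinv_r, Rmult_1_l by lra. now apply Hc.
  - destruct (Glb_Rbar_inhabited S G HG) as [l Hl].
    specialize (Hc l Hl). lra.
Qed.

Theorem lemma2p3 :
  exists C0 : R, 0 < C0 /\
    forall (T : R) (f g : coef) (Gf Gg : R),
      0 < T <= 1 ->
      gauge T f = Finite Gf ->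
      gauge T g = Finite Gg ->
      exists L : C,
        filterlim (pair_partial f g) eventually (locally L) /\
        Cmod L <= C0 * T * Gf * Gg.
Proof.
  exists 10. split; [lra|]. intros T f g Gf Gg HT Hf Hg.
  destruct (Glb_Rbar_inhabited _ _ Hf) as [l0 [Hl0 Hf0]].
  destruct (Glb_Rbar_inhabited _ _ Hg) as [l0' [Hl0' Hg0]].
  destruct (ex_lim_square_sum (fun n m => Cmult (f n m) (g n m)) (10 * T * l0 * l0'))
    as [L HL].
  { intros N. exact (scaled_pair_sum_le T f g l0 l0' N HT Hl0 Hl0' Hf0 Hg0). }
  exists L. split; [exact HL|].
  assert (HGf : 0 <= Gf) by (apply (le_Glb_Rbar _ _ _ Hf); intros l [Hl _]; lra).
  eapply (le_mult_Glb_Rbar _ Gg (10 * T * Gf)); [nra | exact Hg |].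
  intros l' [Hl' Hgl'].
  replace (10 * T * Gf * l') with (10 * T * l' * Gf) by ring.
  eapply (le_mult_Glb_Rbar _ Gf (10 * T * l')); [nra | exact Hf |].
  intros l [Hl Hfl].
  replace (10 * T * l' * l) with (10 * T * l * l') by ring.
  apply (norm_lim_square_sum_le _ _ _ HL). intros N.
  exact (scaled_pair_sum_le T f g l l' N HT Hl Hl' Hfl Hgl').
Qed.
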